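(* Let $(X,d)$ be a finite metric space and $m\ge 0$ an integer. Let $G_0,G_1,\dots,G_m$ be graphs with vertex set $X$, where $G_0$ is the complete graph on $X$ and, for each $0\le i<m$, $G_{i+1}$ is obtained from $G_i$ through a $d$-erasure. Then $G_m$ contains a minimum spanning tree of $(X,d)$.
   Context: All graphs are finite, undirected, simple; edges $xy$ are weighted by $d(xy)=d(x,y)$. A minimum spanning tree of $(X,d)$ is a spanning tree of the complete graph on $X$ minimizing the sum of the weights of its edges. A facet edge of $G$ is an edge $xy$ such that $\{x,y\}$ is a maximal clique of $G$. An edge of $G$ is exposed if it is contained in a unique maximal clique of $G$ and it is not a facet edge. For graphs $G,H$ on vertex set $X$, $H$ is obtained from $G$ through a $d$-erasure if $H=G-e$ for an exposed edge $e$ of $G$ such that $d(e)\ge d(e')$ for every exposed edge $e'$ of $G$. *)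

From mathcomp Require Import all_boot all_order all_algebra.
Set Implicit Arguments. Unset Strict Implicit. Unset Printing Implicit Defensive.
Import Order.TTheory GRing.Theory Num.Theory.
Local Open Scope ring_scope.

Section Defs.
Variables (R : realFieldType) (X : finType).

Definition metric (d : X -> X -> R) : Prop :=
  [/\ (forall x y, 0 <= d x y),
      (forall x y, d x y = 0 <-> x = y),
      (forall x y, d x y = d y x) &
      (forall x y z, d x z <= d x y + d y z)].

(* A simple graph on vertex set X is given by its edge set: a set of
   2-element subsets of X. *)
Definition graph := {set {set X}}.

Definition is_simple_graph (G : graph) : Prop :=
  forall e, e \in G -> #|e| = 2%N.

Definition complete_graph : graph := [set e : {set X} | #|e| == 2%N].

Definition adj (G : graph) : rel X := fun x y => [set x; y] \in G.

Definition edge_w (d : X -> X -> R) (e : {set X}) : R :=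
  match [pick x in e] with
  | Some x => match [pick y in e :\ x] with
              | Some y => d x y
              | None => 0
              end
  | None => 0
  end.

Definition weight (d : X -> X -> R) (T : graph) : R := \sum_(e in T) edge_w d e.

Definition connected (G : graph) : Prop := forall x y, connect (adj G) x y.

Definition acyclic (G : graph) : Prop :=
  ~ exists c : seq X, [/\ uniq c, (3 <= size c)%N & cycle (adj G) c].

Definition spanning_tree (T : graph) : Prop :=
  [/\ T \subset complete_graph, connected T & acyclic T].

Definition is_MST (d : X -> X -> R) (T : graph) : Prop :=
  spanning_tree T /\ (forall T', spanning_tree T' -> weight d T <= weight d T').

Definition clique (G : graph) (C : {set X}) : Prop :=
  forall x y, x \in C -> y \in C -> x != y -> [set x; y] \in G.

Definition maximal_clique (G : graph) (C : {set X}) : Prop :=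
  clique G C /\ (forall D, clique G D -> C \subset D -> D = C).

Definition facet_edge (G : graph) (e : {set X}) : Prop :=
  e \in G /\ maximal_clique G e.

Definition exposed (G : graph) (e : {set X}) : Prop :=
  [/\ e \in G,
      (exists C, [/\ maximal_clique G C, e \subset C &
                    forall C', maximal_clique G C' -> e \subset C' -> C' = C])
    & ~ facet_edge G e].

Definition d_erasure (d : X -> X -> R) (G H : graph) : Prop :=
  exists e, [/\ exposed G e,
               (forall e', exposed G e' -> edge_w d e' <= edge_w d e) &
               H = G :\ e].

End Defs.

(* Along the erasures the graphs stay chordal, in the form "every clique comes last in some
   perfect elimination ordering". The unique maximal clique C0 through an exposed edge xy
   contains every clique through x and y, so an ordering for G survives in G - xy once the
   vertices of C0 ranked before x are moved just after x.
   We carry a minimum spanning tree T of (X, d) inside G_i. If the erased edge xy lies in T,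
   T - xy splits X into the side A of x and the side of y. Chordality provides a second exposed
   edge uv crossing this cut: in a maximal clique with at least three vertices meeting both
   sides, take the vertex m outside C0 of least rank for an ordering ending in C0, and join it
   to the other side (if there is no such clique, use a third vertex of C0). As a d-erasure
   removes an exposed edge of maximal weight, d(uv) <= d(xy), so a spanning tree inside
   T - xy + uv is again minimum, and it lies in G_(i+1). *)

From mathcomp Require Import all_boot all_order all_algebra.
From Stdlib Require Import Classical.
Import Order.TTheory GRing.Theory Num.Theory.
Set Implicit Arguments. Unset Strict Implicit. Unset Printing Implicit Defensive.

Lemma ex_minimizer (T : Type) (P : T -> Prop) (f : T -> nat) :
  (exists t, P t) -> exists2 t, P t & forall t', P t' -> f t <= f t'.
Proof.
move=> [t0 Pt0].
suff: forall n t, P t -> f t <= n -> exists2 t, P t & forall t', P t' -> f t <= f t'.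
  by move=> /(_ (f t0) t0 Pt0 (leqnn _)).
elim=> [|n IHn] t Pt le_tn.
  by exists t => // t' _; move: le_tn; rewrite leqn0 => /eqP->.
case: (classic (exists2 t', P t' & f t' < f t)) => [[t' Pt' lt_t't]|no_lt].
  by apply: (IHn t') => //; rewrite -ltnS (leq_trans lt_t't).
exists t => // t' Pt'; rewrite leqNgt; apply/negP => lt_t't.
by apply: no_lt; exists t'.
Qed.

Lemma ex_minimizer_fin (disp : Order.disp_t) (R : orderType disp) (T : finType)
    (P : T -> Prop) (f : T -> R) :
  (exists t, P t) -> exists2 t, P t & forall t', P t' -> (f t <= f t')%O.
Proof.
move=> /(ex_minimizer (fun t => #|[set s | f s < f t]%O|)) [t Pt tmin].
exists t => // t' Pt'; rewrite leNgt; apply/negP => lt_t't.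
have := tmin t' Pt'; apply/negP; rewrite -ltnNge; apply: proper_card.
apply/properP; split; first by apply/subsetP => s; rewrite !inE => /lt_trans; apply.
by exists t'; rewrite !inE ?ltxx.
Qed.

Lemma connect_ind (T : finType) (e : rel T) (P : T -> Prop) x :
  P x -> (forall a b, P a -> e a b -> P b) -> forall y, connect e x y -> P y.
Proof.
move=> Px Pe y /connectP[p xp ->] {y}.
elim: p x Px xp => [|y p IHp] x Px //= /andP[exy yp].
exact: IHp (Pe x y Px exy) yp.
Qed.

Section Graphs.
Variable X : finType.
Implicit Types (G H S T : graph X) (A C D K L M e f : {set X}) (a b c u v w x y z : X).

Lemma adjC G : symmetric (adj G).
Proof. by move=> x y; rewrite /adj setUC. Qed.

Lemma adjD1 G e x y : adj (G :\ e) x y = ([set x; y] != e) && adj G x y.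
Proof. by rewrite /adj in_setD1. Qed.

Lemma adjD1_notin G e x y : x \notin e -> adj G x y -> adj (G :\ e) x y.
Proof. by move=> xNe Gxy; rewrite adjD1 Gxy andbT; apply: contraNneq xNe => <-; rewrite set21. Qed.

Lemma adj_complete x y : adj (complete_graph X) x y = (x != y).
Proof. by rewrite /adj inE cards2; case: (x != y). Qed.

Lemma adj_neq G x y : G \subset complete_graph X -> adj G x y -> x != y.
Proof. by move=> /subsetP sG /sG; rewrite -adj_complete. Qed.

Lemma connectC G : symmetric (connect (adj G)).
Proof. exact/sym_connect_sym/adjC. Qed.

Lemma connect_subgraph G H : G \subset H -> subrel (connect (adj G)) (connect (adj H)).
Proof. by move=> /subsetP sGH; apply: connect_sub => x y /sGH Hxy; apply: connect1. Qed.

Lemma path_setD1 G e x s y : all [predC e] (x :: s) ->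
  path (adj G) x (rcons s y) -> path (adj (G :\ e)) x (rcons s y).
Proof.
move=> /allP Ne; rewrite !rcons_path => /andP[Gxs Gy].
apply/andP; split; last exact: adjD1_notin (Ne _ (mem_last x s)) Gy.
by apply: sub_in_path Gxs => [a b /Ne aNe _|]; [exact: adjD1_notin | exact/allP].
Qed.

Lemma complete_connected : connected (complete_graph X).
Proof.
move=> a b; have [->|nab] := eqVneq a b; first exact: connect0.
by apply: connect1; rewrite adj_complete.
Qed.

Lemma connected_setD1 S x y : connected S -> connect (adj (S :\ [set x; y])) x y ->
  connected (S :\ [set x; y]).
Proof.
move=> cS cxy a b; apply: connect_sub (cS a b) => p q Spq.
have [epq|npq] := eqVneq [set p; q] [set x; y]; last by apply: connect1; rewrite adjD1 npq.
have: p \in [set x; y] /\ q \in [set x; y] by rewrite -epq set21 set22.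
by case=> /set2P[]-> /set2P[]->; rewrite ?connect0 // connectC.
Qed.

Lemma acyclicP S : S \subset complete_graph X ->
  acyclic S <-> forall x y, [set x; y] \in S -> ~~ connect (adj (S :\ [set x; y])) x y.
Proof.
move=> sS; split=> [acS x y Sxy | cut [c [uc c3 cyc]]].
  have nxy : x != y := adj_neq sS Sxy.
  apply/negP => /connectP[p xp]; case: (shortenP xp) => p' xp' up' _ ylast'.
  apply: acS; exists (x :: p'); split=> //.
    case: p' xp' up' ylast' => [|z [|w p']] //=; first by move=> _ _ yx; rewrite yx eqxx in nxy.
    by rewrite andbT adjD1 => /andP[nxz _] _ yz; rewrite -yz eqxx in nxz.
  have Syx : adj S y x by rewrite adjC.
  rewrite /= rcons_path -ylast' Syx andbT.
  by apply: sub_path xp' => a b; rewrite adjD1 => /andP[].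
case: c uc c3 cyc => [|c0 [|c1 [|r s]]] //= + _ /and3P[Sc01 Sc1r rsc0].
rewrite !inE !negb_or => /andP[/and3P[n01 n0r n0s] /andP[/andP[n1r n1s] _]].
have Ne : all [predC [set c0; c1]] (r :: s).
  apply/allP => z; rewrite inE => /orP[/eqP->|zs]; rewrite /= in_set2 negb_or.
    by rewrite ![r == _]eq_sym n0r n1r.
  by apply/andP; split; [apply: contraNneq n0s | apply: contraNneq n1s] => <-.
have := cut c0 c1 Sc01; rewrite connectC => /negP; apply; apply/connectP.
exists (r :: rcons s c0); last by rewrite /= last_rcons.
have /andP[rNe _] := Ne.
by rewrite /= path_setD1 // andbT adjC (adjD1_notin rNe) // adjC.
Qed.

Lemma connected_subtree H : H \subset complete_graph X -> connected H ->
  exists2 T : graph X, T \subset H & spanning_tree T.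
Proof.
move=> sH cH.
have [S [SH cS] Smin] := @ex_minimizer _ (fun S : graph X => S \subset H /\ connected S)
  (fun S => #|S|) (ex_intro _ H (conj (subxx H) cH)).
have sS := subset_trans SH sH.
exists S => //; split=> //; apply/(acyclicP sS) => x y Sxy; apply/negP => cxy.
have S'H : S :\ [set x; y] \subset H := subset_trans (subD1set _ _) SH.
have := Smin _ (conj S'H (connected_setD1 cS cxy)).
by rewrite (cardsD1 [set x; y] S) Sxy ltnn.
Qed.

Lemma connect_setD1_cases T x y w : connected T ->
  connect (adj (T :\ [set x; y])) x w \/ connect (adj (T :\ [set x; y])) y w.
Proof.
move=> cT; move: w (cT x w); apply: connect_ind; first by left; exact: connect0.
move=> a b xy_a Tab; have [eab|nab] := eqVneq [set a; b] [set x; y].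
  have: b \in [set x; y] by rewrite -eab set22.
  by case/set2P=> ->; [left|right]; exact: connect0.
have T'ab : adj (T :\ [set x; y]) a b by rewrite adjD1 nab.
by case: xy_a => c; [left|right]; apply: connect_trans c (connect1 T'ab).
Qed.

Lemma connected_exchange T x y u v : connected T ->
  connect (adj (T :\ [set x; y])) x u -> ~~ connect (adj (T :\ [set x; y])) x v ->
  connected ([set u; v] |: (T :\ [set x; y])).
Proof.
move=> cT xu xNv; set T' := T :\ _; set H := _ |: _.
have sub : T' \subset H := subsetUr _ _.
have yv : connect (adj T') y v.
  by case: (connect_setD1_cases x y v cT) => // xv; rewrite xv in xNv.
have xy : connect (adj H) x y.
  apply: connect_trans (connect_subgraph sub xu) _.
  have Huv : adj H u v by rewrite /adj setU11.
  by apply: connect_trans (connect1 Huv) _; rewrite connectC (connect_subgraph sub yv).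
have xw w : connect (adj H) x w.
  case: (connect_setD1_cases x y w cT) => /(connect_subgraph sub) // yw.
  exact: connect_trans xy yw.
by move=> a b; apply: connect_trans (xw b); rewrite connectC.
Qed.

Lemma clique_subset G C D : clique G C -> D \subset C -> clique G D.
Proof. by move=> cC /subsetP DC a b /DC aC /DC bC; apply: cC. Qed.

Lemma clique_maximal G C : clique G C -> exists2 M, maximal_clique G M & C \subset M.
Proof.
move=> cC.
have [M [cM CM] Mmin] := @ex_minimizer _ (fun M => clique G M /\ C \subset M)
  (fun M => #|~: M|) (ex_intro _ C (conj cC (subxx C))).
exists M => //; split=> // D cD MD; apply/eqP; apply: contraT => nDM.
have MD' : M \proper D by rewrite properEneq eq_sym nDM MD.
by have := Mmin D (conj cD (subset_trans CM MD)); rewrite leqNgt proper_card ?properC.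
Qed.

Lemma exposed_clique G e : exposed G e -> exists C0, [/\ maximal_clique G C0, e \subset C0,
  e != C0 & forall K, clique G K -> e \subset K -> K \subset C0].
Proof.
case=> Ge [C0 [mC0 eC0 C0_uniq]] Nfacet; exists C0; split=> //.
  by apply/eqP => eC0'; apply: Nfacet; split; rewrite // eC0'.
move=> K cK eK; have [M mM KM] := clique_maximal cK.
by rewrite -(C0_uniq M mM (subset_trans eK KM)).
Qed.

Lemma exposed_maximal G L f : maximal_clique G L -> #|f| = 2 -> f \subset L -> f != L ->
  (forall K, maximal_clique G K -> f \subset K -> K \subset L) -> exposed G f.
Proof.
move=> [cL maxL] /eqP/cards2P[a [b [nab ->]]] fL nfL L_max; split.
- by apply: cL; rewrite // (subsetP fL) ?set21 ?set22.
- by exists L; split=> // K [cK maxK] fK; rewrite (maxK L cL (L_max K (conj cK maxK) fK)).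
- by case=> _ [_ maxf]; move/eqP: nfL; apply; rewrite (maxf L cL fL).
Qed.

(* A perfect elimination ordering in which the clique [C] comes last is encoded by a ranking
   [r] of the vertices outside [C], ties allowed: [a] is [later] than [v] if it is in [C] or
   not ranked before [v]. *)
Definition later C (r : X -> nat) v a := (a \in C) || (r v <= r a).

Definition later_simplicial G C r v := forall a b, a != b -> adj G v a -> adj G v b ->
  later C r v a -> later C r v b -> adj G a b.

Definition peo G C r := forall v, v \notin C -> later_simplicial G C r v.

(* Equivalent to chordality (take [C] empty for one direction). *)
Definition chordal G := forall C, clique G C -> exists r, peo G C r.

Definition later_nbhd G C r v := v |: [set a | adj G v a && later C r v a].

Lemma mem_later_nbhd G C r v a : adj G v a -> later C r v a -> a \in later_nbhd G C r v.
Proof. by move=> va la; rewrite !inE va la orbT. Qed.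

Lemma later_nbhd_clique G C r v : later_simplicial G C r v -> clique G (later_nbhd G C r v).
Proof.
move=> simp_v a b; rewrite !inE.
move=> /orP[/eqP->|/andP[va la]] /orP[/eqP->|/andP[vb lb]] nab; rewrite ?eqxx // in nab.
- by move: va; rewrite /adj setUC.
- exact: simp_v.
Qed.

Lemma chordal_complete : chordal (complete_graph X).
Proof. by move=> C _; exists (fun=> 0) => v _ a b nab *; rewrite adj_complete. Qed.

Section PeoSetD1.
Variables (G : graph X) (C0 C : {set X}) (r : X -> nat) (x y : X).
Hypothesis sG : G \subset complete_graph X.
Hypothesis cC0 : clique G C0.
Hypotheses (xC0 : x \in C0) (yC0 : y \in C0) (nxy : x != y).
Hypothesis C0_max : forall K, clique G K -> x \in K -> y \in K -> K \subset C0.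
Hypothesis peo_r : peo G C r.
Hypotheses (xNC : x \notin C) (later_xy : later C r x y).

Let e := [set x; y].
Let N := later_nbhd G C r.

(* The vertices of [C0 :\: C] ranked no later than [x] move to just after [x]; doubling the
   ranks makes room for them. *)
Let moved := [set w in C0 | [&& w \notin C, w != x, w != y & r w <= r x]].
Let rerank w := if w \in moved then (r x).*2.+1 else (r w).*2.

Let moved_C0 w : w \in moved -> w \in C0.
Proof. by rewrite inE => /andP[]. Qed.

Let moved_rank w : w \in moved -> r w <= r x.
Proof. by rewrite inE => /andP[_ /and4P[]]. Qed.

Let x_unmoved : x \notin moved.
Proof. by rewrite inE eqxx /= !andbF. Qed.

Let y_unmoved : y \notin moved.
Proof. by rewrite inE eqxx /= !andbF. Qed.

Let later_nbhd_sub_C0 v : v \notin C -> x \in N v -> y \in N v -> N v \subset C0.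
Proof. by move=> vNC; apply: C0_max; apply/later_nbhd_clique/peo_r. Qed.

Let moved_nbhd w : w \in moved -> N w \subset C0.
Proof.
rewrite inE => /andP[wC0 /and4P[wNC wx wy rwx]].
apply: later_nbhd_sub_C0 => //; apply: mem_later_nbhd; try exact: cC0.
  by rewrite /later rwx orbT.
by move: later_xy; rewrite /later => /orP[->//|rxy]; rewrite (leq_trans rwx rxy) orbT.
Qed.

Let x_nbhd : N x \subset C0.
Proof.
apply: later_nbhd_sub_C0 => //; first exact: setU11.
by apply: mem_later_nbhd; first exact: cC0.
Qed.

Let adj_setD1_C0 a b z : a \in C0 -> b \in C0 -> a != b -> z \in e -> z != a -> z != b ->
  adj (G :\ e) a b.
Proof.
move=> aC0 bC0 nab ze za zb; have Gab : adj G a b := cC0 aC0 bC0 nab.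
rewrite adjD1 Gab andbT; apply/eqP => abe.
by move: ze; rewrite -abe in_set2 (negbTE za) (negbTE zb).
Qed.

Let later_simplicial_C0 v z : z \in e ->
  (forall c, adj (G :\ e) v c -> later C rerank v c -> c \in C0 /\ c != z) ->
  later_simplicial (G :\ e) C rerank v.
Proof.
move=> ze v_C0 a b nab va vb la lb.
have [aC0 az] := v_C0 a va la; have [bC0 bz] := v_C0 b vb lb.
by apply: (adj_setD1_C0 aC0 bC0 nab ze); rewrite eq_sym.
Qed.

Let moved_later_simplicial v : v \in moved -> later_simplicial (G :\ e) C rerank v.
Proof.
move=> vM; apply: (@later_simplicial_C0 v x); first exact: set21.
move=> c; rewrite adjD1 => /andP[_ vc]; rewrite /later /rerank vM.
have [cM _|cNM lvc] := boolP (c \in moved).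
  by split; [exact: moved_C0 | apply: contraNneq x_unmoved => <-].
have lc : later C r v c.
  move: lvc; rewrite /later => /orP[->//|]; rewrite ltn_double => rxc.
  by rewrite (leq_trans (moved_rank vM) (ltnW rxc)) orbT.
split; first exact: (subsetP (moved_nbhd vM)) _ (mem_later_nbhd vc lc).
by apply/eqP => cx; move: lvc; rewrite cx (negbTE xNC) ltnn.
Qed.

Let x_later_simplicial : later_simplicial (G :\ e) C rerank x.
Proof.
apply: (@later_simplicial_C0 x y); first exact: set22.
move=> c; rewrite adjD1 => /andP[xcNe xc] lxc.
split; last by apply: contraNneq xcNe => ->; rewrite eqxx.
have [/moved_C0 //|cNM] := boolP (c \in moved).
apply: (subsetP x_nbhd); apply: mem_later_nbhd xc _.
by move: lxc; rewrite /later /rerank (negbTE cNM) (negbTE x_unmoved) leq_double.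
Qed.

Let y_later_simplicial : y \notin C -> r y <= r x -> later_simplicial (G :\ e) C rerank y.
Proof.
move=> yNC ryx; have y_nbhd : N y \subset C0.
  apply: later_nbhd_sub_C0 => //; last exact: setU11.
  by apply: mem_later_nbhd; [apply: cC0; rewrite // eq_sym | rewrite /later ryx orbT].
apply: (@later_simplicial_C0 y x); first exact: set21.
move=> c; rewrite adjD1 => /andP[ycNe yc] lyc.
split; last by apply: contraNneq ycNe => ->; rewrite setUC eqxx.
have [/moved_C0 //|cNM] := boolP (c \in moved).
apply: (subsetP y_nbhd); apply: mem_later_nbhd yc _.
by move: lyc; rewrite /later /rerank (negbTE cNM) (negbTE y_unmoved) leq_double.
Qed.

Let later_rerank v c : v \notin C -> v \notin moved -> v != x ->
  ~~ ((v == y) && (r y <= r x)) -> adj G v c -> later C rerank v c -> later C r v c.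
Proof.
move=> vNC vNM vx vy vc; rewrite /later /rerank (negbTE vNM).
case: ifP => [cM|_]; last by rewrite leq_double.
case/orP=> [->//|]; rewrite leq_Sdouble => rvx.
apply/orP; right; rewrite leqNgt; apply/negP => rcv.
have vC0 : v \in C0.
  apply: (subsetP (moved_nbhd cM)); apply: mem_later_nbhd; first by rewrite adjC.
  by rewrite /later ltnW ?orbT.
have vy' : v != y by apply: contraNneq vy => vy'; rewrite vy' eqxx -vy' rvx.
by move: vNM; rewrite inE vC0 vNC vx vy' rvx.
Qed.

Let other_later_simplicial v : v \notin C -> v \notin moved -> v != x ->
  ~~ ((v == y) && (r y <= r x)) -> later_simplicial (G :\ e) C rerank v.
Proof.
move=> vNC vNM vx vy a b nab; rewrite !adjD1 => /andP[_ va] /andP[_ vb].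
move=> /(later_rerank vNC vNM vx vy va) la /(later_rerank vNC vNM vx vy vb) lb.
rewrite (peo_r vNC nab va vb la lb) andbT; apply/eqP => abe.
have ends z : z \in e -> adj G v z /\ later C r v z.
  by rewrite -abe => /set2P[]->.
have [vx' lx] := ends x (set21 _ _); have [vy' ly] := ends y (set22 _ _).
have vC0 : v \in C0.
  apply: (subsetP (later_nbhd_sub_C0 vNC (mem_later_nbhd vx' lx) (mem_later_nbhd vy' ly))).
  exact: setU11.
have rvx : r v <= r x by move: lx; rewrite /later (negbTE xNC).
by move: vNM; rewrite inE vC0 vNC vx (adj_neq sG vy') rvx.
Qed.

Lemma peo_setD1 : exists r', peo (G :\ [set x; y]) C r'.
Proof.
exists rerank => v vNC.
have [vM|vNM] := boolP (v \in moved); first exact: moved_later_simplicial.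
have [->|vx] := eqVneq v x; first exact: x_later_simplicial.
have [/andP[/eqP vy ryx]|vy] := boolP ((v == y) && (r y <= r x)).
  by rewrite vy in vNC *; apply: y_later_simplicial.
exact: other_later_simplicial.
Qed.

End PeoSetD1.

Lemma chordal_setD1 G e : G \subset complete_graph X -> chordal G -> exposed G e ->
  chordal (G :\ e).
Proof.
move=> sG chG ex; have [C0 [[cC0 _] eC0 _ C0_max]] := exposed_clique ex.
have Ge : e \in G by case: ex.
have /cards2P[x [y [nxy ee]]] : #|e| == 2 by have := subsetP sG e Ge; rewrite inE.
subst e => C cC.
have cCG : clique G C.
  by move=> a b aC bC nab; have := cC a b aC bC nab; rewrite in_setD1 => /andP[].
have [r peo_r] := chG C cCG.
have C0_max' K : clique G K -> x \in K -> y \in K -> K \subset C0.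
  by move=> cK xK yK; apply: C0_max cK _; rewrite subUset !sub1set xK yK.
have [xC0 yC0] : x \in C0 /\ y \in C0 by rewrite !(subsetP eC0) ?set21 ?set22.
have xy_notin_C : x \in C -> y \notin C.
  by move=> xC; apply/negP => yC; have := cC x y xC yC nxy; rewrite in_setD1 eqxx.
have [[xNC lxy]|[yNC lyx]] : (x \notin C /\ later C r x y) \/ (y \notin C /\ later C r y x).
  rewrite /later; case: (boolP (x \in C)) => [xC|xNC]; first by right; rewrite xy_notin_C.
  case: (boolP (y \in C)) => [_|yNC]; first by left.
  by case: (leqP (r x) (r y)) => [rxy|/ltnW ryx]; [left|right].
- exact: peo_setD1 sG cC0 xC0 yC0 nxy C0_max' peo_r xNC lxy.
- rewrite setUC; apply: peo_setD1 sG cC0 yC0 xC0 _ _ peo_r yNC lyx; first by rewrite eq_sym.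
  by move=> K cK yK xK; apply: C0_max'.
Qed.

Definition straddles A L := (exists2 p, p \in L & p \in A) /\ (exists2 q, q \in L & q \notin A).

Lemma straddles_pair A L a b : a \in L -> b \in L -> (a \in A) != (b \in A) -> straddles A L.
Proof.
by move=> aL bL; case: (boolP (a \in A)) => aA; case: (boolP (b \in A)) => bA //= _;
  split; by [exists a | exists b].
Qed.

Definition big_crossing_clique G A L := [/\ maximal_clique G L, 2 < #|L| & straddles A L].

Lemma big_crossing_cliqueI G A K a b s : maximal_clique G K -> [set a; b] \subset K ->
  (a \in A) != (b \in A) -> s \in K -> s \notin [set a; b] -> big_crossing_clique G A K.
Proof.
move=> mK abK abA sK sNab; have nab : a != b by apply: contraNneq abA => ->.
split=> //; last exact: straddles_pair (subsetP abK a (set21 a b)) (subsetP abK b (set22 a b)) abA.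
have <- : #|[set a; b]| = 2 by rewrite cards2 nab.
by apply: proper_card; apply/properP; split=> //; exists s.
Qed.

Lemma exposed_inside G A C0 p q : maximal_clique G C0 ->
  (forall L, big_crossing_clique G A L -> L \subset C0) ->
  p \in C0 -> q \in C0 -> (p \in A) != (q \in A) -> [set p; q] != C0 -> exposed G [set p; q].
Proof.
move=> mC0 C0_max pC0 qC0 pqA npqC0.
have npq : p != q by apply: contraNneq pqA => ->.
have fC0 : [set p; q] \subset C0 by rewrite subUset !sub1set pC0 qC0.
have cardf : #|[set p; q]| = 2 by rewrite cards2 npq.
apply: (exposed_maximal mC0 cardf fC0 npqC0) => K mK fK.
apply/subsetP => s sK; apply: contraT => sNC0.
have sNpq : s \notin [set p; q] by apply: contraNN sNC0 => /(subsetP fC0).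
have /subsetP/(_ s sK) := C0_max K (big_crossing_cliqueI mK fK pqA sK sNpq).
by rewrite (negbTE sNC0).
Qed.

Lemma exposed_first_crossing G A C0 r L m : peo G C0 r ->
  big_crossing_clique G A L -> m \in L :\: C0 ->
  (forall K s, big_crossing_clique G A K -> s \in K :\: C0 -> r m <= r s) ->
  exists u v, [/\ u \in A, v \notin A, m \in [set u; v] & exposed G [set u; v]].
Proof.
move=> peo_r L_big /setDP[mL mNC0] m_min.
have [[cL maxL] L3 [[p pL pA] [q qL qNA]]] := L_big.
pose t := if m \in A then q else p.
have tL : t \in L by rewrite /t; case: ifP.
have mtA : (m \in A) != (t \in A) by rewrite /t; case: (m \in A); rewrite ?pA ?(negbTE qNA).
have nmt : m != t by apply: contraNneq mtA => <-.
have LN : L \subset later_nbhd G C0 r m.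
  apply/subsetP => s sL; have [->|nsm] := eqVneq s m; first exact: setU11.
  apply: mem_later_nbhd; first by apply: cL; rewrite // eq_sym.
  rewrite /later; case: (boolP (s \in C0)) => //= sNC0.
  by apply: m_min L_big _; rewrite inE sNC0 sL.
suff f_exp : exposed G [set m; t].
  case: (boolP (m \in A)) mtA => mA /= tA.
    by exists m, t; rewrite set21; split; rewrite ?(negPf tA).
  by exists t, m; rewrite setUC set21; split; rewrite ?(negbNE tA).
have cardf : #|[set m; t]| = 2 by rewrite cards2 nmt.
have fL : [set m; t] \subset L by rewrite subUset !sub1set mL tL.
apply: (exposed_maximal (conj cL maxL) cardf fL).
  by apply: contraTneq L3 => <-; rewrite cardf.
(* A maximal clique [K] through [m] and [t] either lies in the later neighbourhood of [m],
   hence in [L], or has a vertex outside [C0] ranked before [m]. *)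
move=> K [cK maxK] fK.
have [KN|/subsetPn[s sK sNN]] := boolP (K \subset later_nbhd G C0 r m).
  have cKL : clique G (K :|: L).
    by apply: clique_subset (later_nbhd_clique (peo_r m mNC0)) _; rewrite subUset KN LN.
  by rewrite -(maxL _ cKL (subsetUr K L)) subsetUl.
have st : s != t by apply: contraNneq sNN => ->; exact: (subsetP LN).
have nsm : s != m by apply: contraNneq sNN => ->; exact: setU11.
have ms : adj G m s.
  by apply: cK; [exact: (subsetP fK) _ (set21 _ _) | exact: sK | rewrite eq_sym].
move: sNN; rewrite !inE negb_or nsm ms /= /later negb_or -ltnNge => /andP[sNC0 rsm].
have sNmt : s \notin [set m; t] by rewrite in_set2 negb_or nsm.
have := m_min K s (big_crossing_cliqueI (conj cK maxK) fK mtA sK sNmt).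
by rewrite inE sNC0 sK leqNgt rsm => /(_ isT).
Qed.

Lemma exposed_crossing G A x y : chordal G -> exposed G [set x; y] -> x \in A -> y \notin A ->
  exists u v, [/\ u \in A, v \notin A, exposed G [set u; v] & [set u; v] != [set x; y]].
Proof.
move=> chG ex xA yNA; have [C0 [mC0 eC0 neC0 _]] := exposed_clique ex.
have [r peo_r] := chG C0 mC0.1.
case: (classic (exists Lm : {set X} * X,
  big_crossing_clique G A Lm.1 /\ Lm.2 \in Lm.1 :\: C0)) => [ex_big|no_big].
  have [[L m] /= [L_big mLC0] m_min] := ex_minimizer (fun Lm : {set X} * X => r Lm.2) ex_big.
  have [u [v [uA vNA muv uv_exp]]] := exposed_first_crossing peo_r L_big mLC0
    (fun K s K_big sKC0 => m_min (K, s) (conj K_big sKC0)).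
  exists u, v; split=> //; apply: contraTneq muv => ->.
  by apply: contraNN (setDP mLC0).2 => /(subsetP eC0).
have C0_max L : big_crossing_clique G A L -> L \subset C0.
  move=> L_big; apply/subsetP => m mL; apply: contraT => mNC0.
  by case: no_big; exists (L, m); rewrite inE mNC0 mL.
have [z zC0 zNe] : exists2 z, z \in C0 & z \notin [set x; y].
  by apply/subsetPn; move: neC0; rewrite eqEsubset eC0.
have nxy : x != y by apply: contraNneq yNA => <-.
have [xC0 yC0] : x \in C0 /\ y \in C0 by rewrite !(subsetP eC0) ?set21 ?set22.
have pair_exposed a b c : a \in C0 -> b \in C0 -> c \in C0 -> c \notin [set a; b] ->
    (a \in A) != (b \in A) -> exposed G [set a; b].
  move=> aC0 bC0 cC0 cN abA; apply: exposed_inside mC0 C0_max aC0 bC0 abA _.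
  by apply: contraNneq cN => ->.
case: (boolP (z \in A)) => zA.
  exists z, y; split=> //.
    apply: pair_exposed zC0 yC0 xC0 _ _; last by rewrite zA (negbTE yNA).
    by rewrite in_set2 negb_or nxy andbT; apply: contraNneq zNe => <-; exact: set21.
  by apply: contraNneq zNe => zy_xy; rewrite -zy_xy set21.
exists x, z; split=> //.
  apply: pair_exposed xC0 zC0 yC0 _ _; last by rewrite xA.
  by rewrite in_set2 negb_or eq_sym nxy /=; apply: contraNneq zNe => ->; exact: set22.
by apply: contraNneq zNe => xz_xy; rewrite -xz_xy set22.
Qed.

End Graphs.

Local Open Scope ring_scope.

Section MinimumSpanningTree.
Variables (R : realFieldType) (X : finType) (d : X -> X -> R).
Hypothesis md : metric d.
Implicit Types (G H S T : graph X) (e : {set X}) (u v x y : X).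

Lemma edge_w_ge0 e : 0 <= edge_w d e.
Proof.
case: md => d_ge0 _ _ _; rewrite /edge_w.
by case: pickP => [a _|_] //; case: pickP.
Qed.

Lemma weight_subset S H : S \subset H -> weight d S <= weight d H.
Proof.
move=> SH; rewrite /weight [leRHS](big_setID S) /= (setIidPr SH) lerDl.
by apply: sumr_ge0 => e _; exact: edge_w_ge0.
Qed.

Lemma MST_exists : exists T, is_MST d T.
Proof.
have [T0 _ T0_tree] := connected_subtree (subxx _) (@complete_connected X).
have [T T_tree T_min] := ex_minimizer_fin (weight d) (ex_intro _ T0 T0_tree).
by exists T.
Qed.

Lemma MST_exchange T x y u v : is_MST d T -> [set x; y] \in T ->
  connect (adj (T :\ [set x; y])) x u -> ~~ connect (adj (T :\ [set x; y])) x v ->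
  edge_w d [set u; v] <= edge_w d [set x; y] ->
  exists2 T2, is_MST d T2 & T2 \subset [set u; v] |: (T :\ [set x; y]).
Proof.
move=> [[sT cT _] T_min] Txy xu xNv le_uv_xy; set H := _ |: _.
have nuv : u != v by apply: contraNneq xNv => <-.
have sH : H \subset complete_graph X.
  by rewrite subUset sub1set inE cards2 nuv (subset_trans (subD1set _ _) sT).
have [T2 T2H T2_tree] := connected_subtree sH (connected_exchange cT xu xNv).
exists T2 => //; split=> // T' T'_tree.
apply: le_trans (weight_subset T2H) _; apply: le_trans (T_min T' T'_tree).
have uvNT : [set u; v] \notin T :\ [set x; y].
  by apply: contra xNv => T'uv; apply: connect_trans xu (connect1 T'uv).
by rewrite /weight big_setU1 //= [leRHS](big_setD1 [set x; y]) //= lerD2r.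
Qed.

Lemma MST_d_erasure G H T : G \subset complete_graph X -> chordal G -> d_erasure d G H ->
  is_MST d T -> T \subset G -> exists2 T', is_MST d T' & T' \subset H.
Proof.
move=> sG chG [e [e_exp e_max ->]] T_mst TG.
have Ge : e \in G by case: e_exp.
have /cards2P[x [y [nxy ee]]] : #|e| == 2%N by have := subsetP sG e Ge; rewrite inE.
subst e; have [eT|eNT] := boolP ([set x; y] \in T); last first.
  exists T => //; apply/subsetP => f fT; rewrite in_setD1 (subsetP TG f fT) andbT.
  by apply: contraNneq eNT => <-.
set A := [set w | connect (adj (T :\ [set x; y])) x w].
have xA : x \in A by rewrite inE connect0.
have yNA : y \notin A.
  by rewrite inE; case: T_mst => [[sT _ acT] _]; apply: (acyclicP sT).1.
have [u [v [uA vNA uv_exp uv_ne]]] := exposed_crossing chG e_exp xA yNA.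
rewrite !inE in uA vNA.
have [T2 T2_mst T2_sub] := MST_exchange T_mst eT uA vNA (e_max _ uv_exp).
exists T2 => //; apply: subset_trans T2_sub _.
have Guv : [set u; v] \in G by case: uv_exp.
by rewrite subUset sub1set in_setD1 uv_ne Guv setSD.
Qed.

End MinimumSpanningTree.

Theorem theorem3p2 (R : realFieldType) (X : finType) (d : X -> X -> R)
  (m : nat) (G : nat -> graph X) :
  metric d ->
  G 0%N = complete_graph X ->
  (forall i, (i < m)%N -> d_erasure d (G i) (G i.+1)) ->
  exists T : graph X, is_MST d T /\ T \subset G m.
Proof.
move=> md G0 erasure.
suff inv : forall i, (i <= m)%N -> [/\ G i \subset complete_graph X, chordal (G i) &
    exists2 T, is_MST d T & T \subset G i].
  by have [_ _ [T T_mst TG]] := inv m (leqnn m); exists T.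
elim=> [|i IHi] lt_im.
  rewrite G0; split; [exact: subxx | exact: chordal_complete |].
  by have [T T_mst] := MST_exists d; exists T => //; case: T_mst => [[]].
have [sG chG [T T_mst TG]] := IHi (ltnW lt_im).
have [e [e_exp _ Gi1]] := erasure i lt_im.
split.
- by rewrite Gi1; apply: subset_trans (subD1set _ _) sG.
- by rewrite Gi1; apply: chordal_setD1.
- exact: (MST_d_erasure md sG chG (erasure i lt_im) T_mst TG).
Qed.
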